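(* Let $\omega$ be a general obstacle that does not have a cross, and let $S^*$ be a minimum skeleton for $\omega$. Then $|S^*|\geq 3$.
   Context: An obstacle $\omega$ is a simple polygon in $\mathbb{R}^2$ (a closed, bounded polygonal region without holes whose boundary does not intersect itself), assumed in general position (no three of its vertices are collinear); vertices and edges of $\omega$ are those of its boundary. $\omega$ is rectilinear if each edge is horizontal or vertical, and a rectilinear obstacle is rectilinearly-convex if any two points of $\omega$ can be joined by a shortest rectilinear path (made of horizontal and vertical segments, of minimum $\ell_1$ length) contained in $\omega$. A corner point of a rectilinear path is a point where a horizontal and a vertical segment of the path meet. A set $S$ of closed line segments is inside $\omega$ if the union of its elements is contained in $\omega$. Such an $S$ is a skeleton for $\omega$ if for every pair of points $p,q$ not in the interior of $\omega$ such that every shortest rectilinear path between $p$ and $q$ with at most one corner point meets the interior of $\omega$, each such path intersects some element of $S$; a minimum skeleton is one with the fewest segments and $|S|$ is the number of segments. $B(\omega)$ is the smallest closed axis-parallel rectangle containing $\omega$; the extreme edges are the edges of $\omega$ lying on the boundary of $B(\omega)$ (exactly four: left, right, bottom, top); an extreme corner is a vertex of $\omega$ that is a common endpoint of two extreme edges. A general obstacle is a rectilinearly-convex obstacle with no extreme corners. A cross of $\omega$ is a pair $\{s_H,s_V\}$ of line segments contained in $\omega$, where $s_H$ has one endpoint on each of the two horizontal extreme edges and $s_V$ has one endpoint on each of the two vertical extreme edges. *)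

From Stdlib Require Import Reals List Arith.
Import ListNotations.
Open Scope R_scope.

Definition point := (R * R)%type.

Definition seg (a b : point) (p : point) : Prop :=
  exists t, 0 <= t <= 1 /\
    fst p = fst a + t * (fst b - fst a) /\
    snd p = snd a + t * (snd b - snd a).

Definition vtx (vs : list point) (i : nat) : point := nth i vs (0, 0).
Definition enext (vs : list point) (i : nat) : nat := (S i mod length vs)%nat.
Definition on_edge (vs : list point) (i : nat) (p : point) : Prop :=
  seg (vtx vs i) (vtx vs (enext vs i)) p.

Definition on_boundary (vs : list point) (p : point) : Prop :=
  exists i, (i < length vs)%nat /\ on_edge vs i p.

Definition collinear (a b c : point) : Prop :=
  (fst b - fst a) * (snd c - snd a) - (snd b - snd a) * (fst c - fst a) = 0.

Definition general_position (vs : list point) : Prop :=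
  forall i j k, (i < length vs)%nat -> (j < length vs)%nat -> (k < length vs)%nat ->
    i <> j -> j <> k -> i <> k -> ~ collinear (vtx vs i) (vtx vs j) (vtx vs k).

Definition simple_boundary (vs : list point) : Prop :=
  (3 <= length vs)%nat /\ NoDup vs /\
  forall i j, (i < length vs)%nat -> (j < length vs)%nat -> i <> j ->
    forall p, on_edge vs i p -> on_edge vs j p ->
      (j = enext vs i /\ p = vtx vs j) \/ (i = enext vs j /\ p = vtx vs i).

(** points of the bounded component of the complement of the boundary:
    not on the boundary, and continuous paths avoiding the boundary cannot
    go arbitrarily far *)
Definition inside (vs : list point) (p : point) : Prop :=
  ~ on_boundary vs p /\
  exists M, forall f g : R -> R,
    (forall t, continuity_pt f t) -> (forall t, continuity_pt g t) ->
    f 0 = fst p -> g 0 = snd p ->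
    (forall t, 0 <= t <= 1 -> ~ on_boundary vs (f t, g t)) ->
    Rabs (f 1) + Rabs (g 1) <= M.

(** the obstacle: closed bounded region enclosed by the polygon *)
Definition region (vs : list point) (p : point) : Prop :=
  on_boundary vs p \/ inside vs p.

Definition simple_polygon (vs : list point) : Prop :=
  simple_boundary vs /\ general_position vs.

Definition interior (A : point -> Prop) (p : point) : Prop :=
  exists eps, 0 < eps /\ forall q,
    Rabs (fst q - fst p) < eps -> Rabs (snd q - snd p) < eps -> A q.

Definition rectilinear (vs : list point) : Prop :=
  forall i, (i < length vs)%nat ->
    fst (vtx vs i) = fst (vtx vs (enext vs i)) \/
    snd (vtx vs i) = snd (vtx vs (enext vs i)).

Definition l1 (a b : point) : R := Rabs (fst a - fst b) + Rabs (snd a - snd b).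

Fixpoint rpath (l : list point) : Prop :=
  match l with
  | a :: ((b :: _) as t) => (fst a = fst b \/ snd a = snd b) /\ rpath t
  | _ => True
  end.

Fixpoint plen (l : list point) : R :=
  match l with
  | a :: ((b :: _) as t) => l1 a b + plen t
  | _ => 0
  end.

Fixpoint path_in (A : point -> Prop) (l : list point) : Prop :=
  match l with
  | a :: ((b :: _) as t) => (forall p, seg a b p -> A p) /\ path_in A t
  | [a] => A a
  | [] => True
  end.

Definition rect_convex (A : point -> Prop) : Prop :=
  forall p q, A p -> A q -> exists m,
    last (p :: m) p = q /\ rpath (p :: m) /\ plen (p :: m) = l1 p q /\
    path_in A (p :: m).

Definition left_edge (vs : list point) (i : nat) : Prop :=
  (i < length vs)%nat /\ fst (vtx vs i) = fst (vtx vs (enext vs i)) /\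
  forall q, region vs q -> fst (vtx vs i) <= fst q.
Definition right_edge (vs : list point) (i : nat) : Prop :=
  (i < length vs)%nat /\ fst (vtx vs i) = fst (vtx vs (enext vs i)) /\
  forall q, region vs q -> fst q <= fst (vtx vs i).
Definition bottom_edge (vs : list point) (i : nat) : Prop :=
  (i < length vs)%nat /\ snd (vtx vs i) = snd (vtx vs (enext vs i)) /\
  forall q, region vs q -> snd (vtx vs i) <= snd q.
Definition top_edge (vs : list point) (i : nat) : Prop :=
  (i < length vs)%nat /\ snd (vtx vs i) = snd (vtx vs (enext vs i)) /\
  forall q, region vs q -> snd q <= snd (vtx vs i).
Definition extreme_edge (vs : list point) (i : nat) : Prop :=
  left_edge vs i \/ right_edge vs i \/ bottom_edge vs i \/ top_edge vs i.

Definition is_endpoint (vs : list point) (i : nat) (v : point) : Prop :=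
  v = vtx vs i \/ v = vtx vs (enext vs i).

Definition has_extreme_corner (vs : list point) : Prop :=
  exists i j v, i <> j /\ extreme_edge vs i /\ extreme_edge vs j /\
    (exists k, (k < length vs)%nat /\ v = vtx vs k) /\
    is_endpoint vs i v /\ is_endpoint vs j v.

Definition general_obstacle (vs : list point) : Prop :=
  simple_polygon vs /\ rectilinear vs /\ rect_convex (region vs) /\
  ~ has_extreme_corner vs.

Definition seg_inside (A : point -> Prop) (a b : point) : Prop :=
  forall p, seg a b p -> A p.

Definition has_cross (vs : list point) : Prop :=
  (exists a b i j, a <> b /\ seg_inside (region vs) a b /\
     bottom_edge vs i /\ top_edge vs j /\ on_edge vs i a /\ on_edge vs j b) /\
  (exists c d i j, c <> d /\ seg_inside (region vs) c d /\
     left_edge vs i /\ right_edge vs j /\ on_edge vs i c /\ on_edge vs j d).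

(** the (point sets of the) shortest rectilinear paths from p to q with at
    most one corner point: p -> c -> q with c = (q.x, p.y) or (p.x, q.y) *)
Definition lcorner (p q c : point) : Prop :=
  c = (fst q, snd p) \/ c = (fst p, snd q).
Definition lpath (p q c : point) (x : point) : Prop := seg p c x \/ seg c q x.

Definition is_skeleton (vs : list point) (S : list (point * point)) : Prop :=
  (forall s, In s S -> fst s <> snd s /\ seg_inside (region vs) (fst s) (snd s)) /\
  forall p q, ~ interior (region vs) p -> ~ interior (region vs) q ->
    (forall c, lcorner p q c -> exists x, lpath p q c x /\ interior (region vs) x) ->
    forall c, lcorner p q c ->
      exists s x, In s S /\ lpath p q c x /\ seg (fst s) (snd s) x.

(** the list enumerates pairwise distinct segments, so |S| = length S *)
Definition distinct_segs (S : list (point * point)) : Prop :=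
  forall i j, (i < length S)%nat -> (j < length S)%nat -> i <> j ->
    let si := nth i S ((0,0),(0,0)) in let sj := nth j S ((0,0),(0,0)) in
    exists x, ~ (seg (fst si) (snd si) x <-> seg (fst sj) (snd sj) x).

Definition min_skeleton (vs : list point) (S : list (point * point)) : Prop :=
  is_skeleton vs S /\ distinct_segs S /\
  forall S', is_skeleton vs S' -> distinct_segs S' -> (length S <= length S')%nat.

From Pilot Require Import Defs.
From Stdlib Require Import Reals List Arith Lra Lia Classical.
Import ListNotations.
Open Scope R_scope.

(* Suppose a skeleton S of the obstacle has at most two segments.  The
   obstacle lies in its bounding box [xL, xR] x [yB, yT], meets each side
   along an extreme edge and, having no extreme corner, avoids the four
   corners of the box.  Above all but finitely many x in [xL, xR] lies an
   interior point of the obstacle (between two horizontal boundary edges),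
   and the vertical segment through it from below the box to above it is a
   one-corner shortest path meeting the interior, hence it meets S.  The
   projections of the segments being closed, the x-projections of S cover
   [xL, xR] and likewise the y-projections cover [yB, yT].  A segment of S
   touching the bottom side and one touching the top side are then either
   equal or overlap horizontally, and by vertical convexity of the obstacle a
   segment joining their ends connects the bottom and top edges.
   Symmetrically the left and right edges are connected: a cross. *)

Lemma enext_eq vs i : (i < length vs)%nat ->
  enext vs i = (if Nat.eqb (S i) (length vs) then 0 else S i)%nat.
Proof.
  intro Hi; unfold enext.
  destruct (Nat.eqb_spec (S i) (length vs)) as [E|E].
  - rewrite E; apply Nat.Div0.mod_same.
  - apply Nat.mod_small; lia.
Qed.

Lemma enext_lt vs i : (i < length vs)%nat -> (enext vs i < length vs)%nat.
Proof.
  intro Hi; rewrite enext_eq by exact Hi; destruct (Nat.eqb_spec (S i) (length vs)); lia.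
Qed.

Lemma enext_neq vs i : (2 <= length vs)%nat -> (i < length vs)%nat -> enext vs i <> i.
Proof.
  intros H2 Hi; rewrite enext_eq by exact Hi; destruct (Nat.eqb_spec (S i) (length vs)); lia.
Qed.

Definition eprev (vs : list point) (j : nat) : nat :=
  if Nat.eqb j 0 then (length vs - 1)%nat else (j - 1)%nat.

Lemma eprev_lt vs j : (j < length vs)%nat -> (eprev vs j < length vs)%nat.
Proof. unfold eprev; destruct (Nat.eqb_spec j 0); lia. Qed.

Lemma enext_eprev vs j : (j < length vs)%nat -> enext vs (eprev vs j) = j.
Proof.
  intro Hj; rewrite enext_eq by (apply eprev_lt; exact Hj); unfold eprev.
  destruct (Nat.eqb_spec j 0).
  - replace (S (length vs - 1)) with (length vs) by lia; rewrite Nat.eqb_refl; lia.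
  - destruct (Nat.eqb_spec (S (j - 1)) (length vs)); lia.
Qed.

Lemma eprev_neq vs j : (2 <= length vs)%nat -> (j < length vs)%nat -> eprev vs j <> j.
Proof. intros H2 Hj; unfold eprev; destruct (Nat.eqb_spec j 0); lia. Qed.

Lemma eprev_neq_enext vs j : (3 <= length vs)%nat -> (j < length vs)%nat ->
  eprev vs j <> enext vs j.
Proof.
  intros H3 Hj; rewrite enext_eq by exact Hj; unfold eprev.
  destruct (Nat.eqb_spec j 0); destruct (Nat.eqb_spec (S j) (length vs)); lia.
Qed.

Lemma vtx_inj vs i j : NoDup vs -> (i < length vs)%nat -> (j < length vs)%nat ->
  vtx vs i = vtx vs j -> i = j.
Proof. intros Hnd Hi Hj; exact (proj1 (NoDup_nth vs (0, 0)) Hnd i j Hi Hj). Qed.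

Lemma edge_endpoints_neq vs i : simple_boundary vs -> (i < length vs)%nat ->
  vtx vs i <> vtx vs (enext vs i).
Proof.
  intros [H3 [Hnd _]] Hi E; apply (enext_neq vs i); [lia | exact Hi |].
  symmetry; exact (vtx_inj vs i _ Hnd Hi (enext_lt vs i Hi) E).
Qed.

Lemma cyclic_switch (P : nat -> bool) n a b : (a < n)%nat -> (b < n)%nat ->
  P a = true -> P b = false ->
  exists k, (k < n)%nat /\ P k = true /\ P (S k mod n) = false.
Proof.
  intros Ha Hb Pa Pb.
  assert (Walk : forall j, P ((a + j) mod n) = false ->
            exists k, (k < n)%nat /\ P k = true /\ P (S k mod n) = false).
  { induction j as [|j IH]; intro Hf.
    - rewrite Nat.add_0_r, Nat.mod_small in Hf by exact Ha; congruence.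
    - destruct (P ((a + j) mod n)) eqn:E; [|exact (IH eq_refl)].
      exists ((a + j) mod n); repeat split; [apply Nat.mod_upper_bound; lia | exact E |].
      replace (S ((a + j) mod n)) with (1 + (a + j) mod n)%nat by lia.
      rewrite Nat.Div0.add_mod_idemp_r.
      replace (1 + (a + j))%nat with (a + S j)%nat by lia; exact Hf. }
  apply (Walk (b + n - a)%nat).
  replace (a + (b + n - a))%nat with (b + 1 * n)%nat by lia.
  rewrite Nat.Div0.mod_add, Nat.mod_small by exact Hb; exact Pb.
Qed.

Definition betw (a b y : R) : Prop := (a <= y <= b) \/ (b <= y <= a).

Lemma seg_start a b : seg a b a.
Proof. exists 0; split; [lra | split; ring]. Qed.

Lemma seg_end a b : seg a b b.
Proof. exists 1; split; [lra | split; ring]. Qed.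

Lemma seg_sym a b z : seg a b z -> seg b a z.
Proof. intros [t [Ht [H1 H2]]]; exists (1 - t); split; [lra|]; rewrite H1, H2; split; ring. Qed.

Lemma seg_betw_fst a b z : seg a b z -> betw (fst a) (fst b) (fst z).
Proof.
  intros [t [Ht [H1 _]]]; rewrite H1; unfold betw.
  destruct (Rle_dec (fst a) (fst b)); [left | right]; split; nra.
Qed.

Lemma seg_betw_snd a b z : seg a b z -> betw (snd a) (snd b) (snd z).
Proof.
  intros [t [Ht [_ H2]]]; rewrite H2; unfold betw.
  destruct (Rle_dec (snd a) (snd b)); [left | right]; split; nra.
Qed.

Lemma ratio_unit b q t : betw b q t -> t <> b ->
  0 <= (t - b) / (q - b) <= 1 /\ (t - b) / (q - b) * (q - b) = t - b.
Proof.
  intros Hbt Htb; assert (Hqb : q - b <> 0) by (destruct Hbt; lra).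
  assert (E : (t - b) / (q - b) * (q - b) = t - b) by (field; exact Hqb).
  split; [|exact E].
  set (r := (t - b) / (q - b)) in *; destruct Hbt; split; nra.
Qed.

Lemma seg_vertical a b y : fst a = fst b -> betw (snd a) (snd b) y -> seg a b (fst a, y).
Proof.
  intros Ex Hy; destruct (Req_dec y (snd a)) as [->|Hya].
  - exists 0; simpl; split; [lra | split; ring].
  - destruct (ratio_unit _ _ _ Hy Hya) as [Ht Et].
    exists ((y - snd a) / (snd b - snd a)); simpl; split; [exact Ht|].
    rewrite <- Ex; split; lra.
Qed.

Lemma seg_horizontal a b x : snd a = snd b -> betw (fst a) (fst b) x -> seg a b (x, snd a).
Proof.
  intros Ey Hx; destruct (Req_dec x (fst a)) as [->|Hxa].
  - exists 0; simpl; split; [lra | split; ring].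
  - destruct (ratio_unit _ _ _ Hx Hxa) as [Ht Et].
    exists ((x - fst a) / (fst b - fst a)); simpl; split; [exact Ht|].
    rewrite <- Ey; split; lra.
Qed.

Lemma vtx_region vs i : (i < length vs)%nat -> region vs (vtx vs i).
Proof. intro Hi; left; exists i; split; [exact Hi | apply seg_start]. Qed.

Lemma seg_inside_ends A a b : seg_inside A a b -> A a /\ A b.
Proof. intro H; split; apply H; [apply seg_start | apply seg_end]. Qed.

(** * Supporting edges in the axis directions *)

Lemma inside_ray_hits_boundary vs q dx dy : inside vs q -> 0 < Rabs dx + Rabs dy ->
  exists s, 0 <= s /\ on_boundary vs (fst q + s * dx, snd q + s * dy).
Proof.
  intros [_ [M HM]] Hd; apply NNPP; intro Hno.
  set (K := (Rabs M + Rabs (fst q) + Rabs (snd q) + 1) / (Rabs dx + Rabs dy)).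
  assert (HK : K * (Rabs dx + Rabs dy) = Rabs M + Rabs (fst q) + Rabs (snd q) + 1)
    by (unfold K; field; lra).
  assert (HK0 : 0 <= K).
  { unfold K; apply Rmult_le_pos; [|left; apply Rinv_0_lt_compat; exact Hd].
    pose proof (Rabs_pos M); pose proof (Rabs_pos (fst q)); pose proof (Rabs_pos (snd q)); lra. }
  assert (Far : Rabs (fst q + K * 1 * dx) + Rabs (snd q + K * 1 * dy) <= M).
  { apply (HM (fun t => fst q + K * t * dx) (fun t => snd q + K * t * dy));
      [intro; reg | intro; reg | ring | ring |].
    intros t Ht Hb; apply Hno; exists (K * t); split; [nra | exact Hb]. }
  pose proof (Rabs_triang (fst q + K * 1 * dx) (- fst q)) as Tx.
  pose proof (Rabs_triang (snd q + K * 1 * dy) (- snd q)) as Ty.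
  replace (fst q + K * 1 * dx + - fst q) with (K * dx) in Tx by ring.
  replace (snd q + K * 1 * dy + - snd q) with (K * dy) in Ty by ring.
  rewrite Rabs_Ropp, Rabs_mult, (Rabs_pos_eq K HK0) in Tx, Ty.
  pose proof (Rle_abs M); lra.
Qed.

Definition axis_dir (a b : R) : Prop :=
  (a = 0 /\ (b = 1 \/ b = -1)) \/ (b = 0 /\ (a = 1 \/ a = -1)).

Definition dot (a b : R) (z : point) : R := a * fst z + b * snd z.

(* (a, b) is the inner normal: [min_edge vs 1 0], [min_edge vs (-1) 0],
   [min_edge vs 0 1] and [min_edge vs 0 (-1)] are the left, right, bottom and
   top edges. *)
Definition min_edge (vs : list point) (a b : R) (i : nat) : Prop :=
  (i < length vs)%nat /\ dot a b (vtx vs i) = dot a b (vtx vs (enext vs i)) /\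
  forall q, region vs q -> dot a b (vtx vs i) <= dot a b q.

Lemma axis_dir_unit a b : axis_dir a b -> a * a + b * b = 1.
Proof. intros [[-> [-> | ->]] | [-> [-> | ->]]]; ring. Qed.

Lemma axis_dir_perp a b : axis_dir a b -> axis_dir b (- a).
Proof. intros [[-> [-> | ->]] | [-> [-> | ->]]]; unfold axis_dir; lra. Qed.

Lemma axis_dir_abs a b : axis_dir a b -> 0 < Rabs (- a) + Rabs (- b).
Proof.
  intro Hd; rewrite !Rabs_Ropp; apply axis_dir_unit in Hd.
  destruct (Req_dec a 0) as [->|Ha].
  - assert (b <> 0) by (intros ->; lra); pose proof (Rabs_pos_lt b H); rewrite Rabs_R0; lra.
  - pose proof (Rabs_pos_lt a Ha); pose proof (Rabs_pos b); lra.
Qed.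

Lemma dot_seg a b u w z : seg u w z ->
  exists t, 0 <= t <= 1 /\ dot a b z = dot a b u + t * (dot a b w - dot a b u).
Proof. intros [t [Ht [H1 H2]]]; exists t; split; [exact Ht|]; unfold dot; rewrite H1, H2; ring. Qed.

Section LowerBound.
Variables (vs : list point) (a b c : R).
Hypothesis vertex_ge : forall k, (k < length vs)%nat -> c <= dot a b (vtx vs k).

Lemma boundary_dot_ge z : on_boundary vs z -> c <= dot a b z.
Proof.
  intros [i [Hi He]]; destruct (dot_seg a b _ _ _ He) as [t [Ht ->]].
  pose proof (vertex_ge i Hi); pose proof (vertex_ge _ (enext_lt vs i Hi)); nra.
Qed.

(* Walking from an inside point against the normal lowers [dot a b] until the
   boundary is met, so inside points lie strictly above the lowest vertex. *)
Lemma inside_dot_gt z : axis_dir a b -> inside vs z -> c < dot a b z.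
Proof.
  intros Hd Hin; destruct (inside_ray_hits_boundary vs z (- a) (- b) Hin (axis_dir_abs a b Hd))
    as [s [Hs Hb]].
  pose proof (boundary_dot_ge _ Hb) as Hc; pose proof (axis_dir_unit a b Hd).
  destruct (Req_dec s 0) as [->|Hs0].
  - exfalso; apply (proj1 Hin); destruct z; simpl in *.
    rewrite !Rmult_0_l, !Rplus_0_r in Hb; exact Hb.
  - unfold dot in *; simpl in *; nra.
Qed.

Lemma region_dot_ge z : axis_dir a b -> region vs z -> c <= dot a b z.
Proof.
  intros Hd [Hb | Hin]; [exact (boundary_dot_ge z Hb) | left; exact (inside_dot_gt z Hd Hin)].
Qed.

End LowerBound.

Lemma collinear_of_dot_eq a b u v w : axis_dir a b ->
  dot a b u = dot a b v -> dot a b u = dot a b w -> collinear u v w.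
Proof.
  unfold collinear, dot; intros [[-> [-> | ->]] | [-> [-> | ->]]] Hv Hw;
  [ replace (snd v) with (snd u) by lra; replace (snd w) with (snd u) by lra
  | replace (snd v) with (snd u) by lra; replace (snd w) with (snd u) by lra
  | replace (fst v) with (fst u) by lra; replace (fst w) with (fst u) by lra
  | replace (fst v) with (fst u) by lra; replace (fst w) with (fst u) by lra ]; ring.
Qed.

Lemma rectilinear_dot vs a b i : axis_dir a b -> rectilinear vs -> (i < length vs)%nat ->
  dot a b (vtx vs i) = dot a b (vtx vs (enext vs i)) \/
  dot b (- a) (vtx vs i) = dot b (- a) (vtx vs (enext vs i)).
Proof.
  intros Hd Hr Hi; unfold dot; destruct (Hr i Hi) as [E | E]; rewrite E;
  destruct Hd as [[-> [-> | ->]] | [-> [-> | ->]]]; first [left; ring | right; ring].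
Qed.

Lemma exists_argmin (f : nat -> R) n : (0 < n)%nat ->
  exists j, (j < n)%nat /\ forall k, (k < n)%nat -> f j <= f k.
Proof.
  induction n as [|n IH]; intro Hn; [lia|].
  destruct (Nat.eq_dec n 0) as [->|Hn0].
  - exists 0%nat; split; [lia|]; intros k Hk; replace k with 0%nat by lia; lra.
  - destruct (IH ltac:(lia)) as [j [Hj Hm]].
    destruct (Rle_lt_dec (f j) (f n)) as [Hle|Hlt].
    + exists j; split; [lia|]; intros k Hk.
      destruct (Nat.eq_dec k n) as [->|]; [exact Hle | apply Hm; lia].
    + exists n; split; [lia|]; intros k Hk.
      destruct (Nat.eq_dec k n) as [->|]; [lra|]; specialize (Hm k ltac:(lia)); lra.
Qed.

Section MinEdges.
Variables (vs : list point) (a b : R).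
Hypotheses (Hd : axis_dir a b) (Hsp : simple_polygon vs) (Hr : rectilinear vs).

Lemma min_edge_vertex_ge i : min_edge vs a b i ->
  forall k, (k < length vs)%nat -> dot a b (vtx vs i) <= dot a b (vtx vs k).
Proof. intros [_ [_ Hmin]] k Hk; exact (Hmin _ (vtx_region vs k Hk)). Qed.

Lemma level_edge_is_min_edge c i :
  (forall k, (k < length vs)%nat -> c <= dot a b (vtx vs k)) -> (i < length vs)%nat ->
  dot a b (vtx vs i) = c -> dot a b (vtx vs i) = dot a b (vtx vs (enext vs i)) ->
  min_edge vs a b i.
Proof.
  intros Hge Hi Hc Hlev; split; [exact Hi | split; [exact Hlev |]].
  intros q Hq; rewrite Hc; exact (region_dot_ge vs a b c Hge q Hd Hq).
Qed.

(* If neither edge at a lowest vertex were level, both would be perpendicular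
   to (a, b) and the vertex with its two neighbours would be collinear. *)
Lemma lowest_vertex_on_min_edge j : (j < length vs)%nat ->
  (forall k, (k < length vs)%nat -> dot a b (vtx vs j) <= dot a b (vtx vs k)) ->
  exists i, min_edge vs a b i /\ on_edge vs i (vtx vs j).
Proof.
  intros Hj Hge; destruct Hsp as [[H3 _] Hgp].
  destruct (rectilinear_dot vs a b j Hd Hr Hj) as [Ej | Ej].
  { exists j; split; [exact (level_edge_is_min_edge _ j Hge Hj eq_refl Ej) | apply seg_start]. }
  pose proof (eprev_lt vs j Hj) as Hp; pose proof (enext_eprev vs j Hj) as Epj.
  destruct (rectilinear_dot vs a b (eprev vs j) Hd Hr Hp) as [Ep | Ep]; rewrite Epj in Ep.
  - exists (eprev vs j); split.
    + apply (level_edge_is_min_edge _ _ Hge Hp Ep); rewrite Epj; exact Ep.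
    + unfold on_edge; rewrite Epj; apply seg_end.
  - exfalso; apply (Hgp (eprev vs j) j (enext vs j) Hp Hj (enext_lt vs j Hj)).
    + apply eprev_neq; lia.
    + intro E; apply (enext_neq vs j); [lia | exact Hj | symmetry; exact E].
    + apply eprev_neq_enext; lia.
    + apply (collinear_of_dot_eq b (- a)); [apply axis_dir_perp; exact Hd | exact Ep |].
      rewrite Ep; exact Ej.
Qed.

Lemma min_edge_exists : exists i, min_edge vs a b i.
Proof.
  assert (Hn : (0 < length vs)%nat) by (destruct Hsp as [[H3 _] _]; lia).
  destruct (exists_argmin (fun k => dot a b (vtx vs k)) _ Hn) as [j [Hj Hm]].
  destruct (lowest_vertex_on_min_edge j Hj Hm) as [i [Hi _]]; exists i; exact Hi.
Qed.

Lemma min_edge_contains i0 z : min_edge vs a b i0 -> region vs z ->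
  dot a b z = dot a b (vtx vs i0) -> exists i, min_edge vs a b i /\ on_edge vs i z.
Proof.
  intros Hi0 Hz Hc; pose proof (min_edge_vertex_ge i0 Hi0) as Hge.
  destruct Hz as [[k [Hk Hke]] | Hin];
    [| exfalso; pose proof (inside_dot_gt vs a b _ Hge z Hd Hin); lra].
  pose proof (enext_lt vs k Hk) as Hk'.
  pose proof (Hge k Hk) as Ga; pose proof (Hge _ Hk') as Gb.
  destruct (Req_dec (dot a b (vtx vs k)) (dot a b (vtx vs (enext vs k)))) as [Lev | NLev].
  { exists k; split; [|exact Hke].
    destruct (dot_seg a b _ _ _ Hke) as [t [_ Et]].
    rewrite <- Lev, Rminus_diag, Rmult_0_r, Rplus_0_r, Hc in Et.
    exact (level_edge_is_min_edge _ k Hge Hk (eq_sym Et) Lev). }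
  destruct Hke as [t [Ht [Zx Zy]]].
  assert (Zd : dot a b z = dot a b (vtx vs k)
                 + t * (dot a b (vtx vs (enext vs k)) - dot a b (vtx vs k)))
    by (unfold dot; rewrite Zx, Zy; ring).
  assert (Ht01 : t = 0 \/ t = 1).
  { destruct (Req_dec t 0) as [|T0]; [left; assumption|].
    destruct (Req_dec t 1) as [|T1]; [right; assumption|].
    exfalso; apply NLev; assert (0 < t < 1) by lra; nra. }
  assert (Hv : exists v, (v < length vs)%nat /\ z = vtx vs v).
  { destruct Ht01 as [-> | ->]; [exists k | exists (enext vs k)]; split; try assumption;
      apply injective_projections; [rewrite Zx | rewrite Zy | rewrite Zx | rewrite Zy]; ring. }
  destruct Hv as [v [Hv ->]]; apply (lowest_vertex_on_min_edge v Hv).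
  intros m Hm; rewrite Hc; exact (Hge m Hm).
Qed.

End MinEdges.

Lemma left_edge_of_min_edge vs i : min_edge vs 1 0 i -> left_edge vs i.
Proof.
  unfold min_edge, dot; intros [Hi [Hl Hm]]; split; [exact Hi | split; [lra|]].
  intros q Hq; specialize (Hm q Hq); lra.
Qed.

Lemma right_edge_of_min_edge vs i : min_edge vs (-1) 0 i -> right_edge vs i.
Proof.
  unfold min_edge, dot; intros [Hi [Hl Hm]]; split; [exact Hi | split; [lra|]].
  intros q Hq; specialize (Hm q Hq); lra.
Qed.

Lemma bottom_edge_of_min_edge vs i : min_edge vs 0 1 i -> bottom_edge vs i.
Proof.
  unfold min_edge, dot; intros [Hi [Hl Hm]]; split; [exact Hi | split; [lra|]].
  intros q Hq; specialize (Hm q Hq); lra.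
Qed.

Lemma top_edge_of_min_edge vs i : min_edge vs 0 (-1) i -> top_edge vs i.
Proof.
  unfold min_edge, dot; intros [Hi [Hl Hm]]; split; [exact Hi | split; [lra|]].
  intros q Hq; specialize (Hm q Hq); lra.
Qed.

Lemma extreme_vertical_of_min_edge vs a i : (a = 1 \/ a = -1) -> min_edge vs a 0 i ->
  extreme_edge vs i /\ fst (vtx vs i) = fst (vtx vs (enext vs i)).
Proof.
  intros [-> | ->] He; (split; [|destruct He as [_ [E _]]; unfold dot in E; lra]).
  - left; exact (left_edge_of_min_edge vs i He).
  - right; left; exact (right_edge_of_min_edge vs i He).
Qed.

Lemma extreme_horizontal_of_min_edge vs b i : (b = 1 \/ b = -1) -> min_edge vs 0 b i ->
  extreme_edge vs i /\ snd (vtx vs i) = snd (vtx vs (enext vs i)).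
Proof.
  intros [-> | ->] He; (split; [|destruct He as [_ [E _]]; unfold dot in E; lra]).
  - right; right; left; exact (bottom_edge_of_min_edge vs i He).
  - right; right; right; exact (top_edge_of_min_edge vs i He).
Qed.

Lemma extreme_edge_lt vs i : extreme_edge vs i -> (i < length vs)%nat.
Proof. intros [[Hi _] | [[Hi _] | [[Hi _] | [Hi _]]]]; exact Hi. Qed.

(* The edges are distinct since an edge has distinct endpoints, so on a simple
   boundary they can only meet at a common vertex. *)
Lemma extreme_corner_of_meet vs i j z : simple_boundary vs ->
  extreme_edge vs i -> extreme_edge vs j ->
  fst (vtx vs i) = fst (vtx vs (enext vs i)) -> snd (vtx vs j) = snd (vtx vs (enext vs j)) ->
  on_edge vs i z -> on_edge vs j z -> has_extreme_corner vs.
Proof.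
  intros Hsb Xi Xj Vi Hj Zi Zj.
  pose proof (extreme_edge_lt vs i Xi) as Hin; pose proof (extreme_edge_lt vs j Xj) as Hjn.
  assert (Hij : i <> j)
    by (intros <-; apply (edge_endpoints_neq vs i Hsb Hin), injective_projections; assumption).
  destruct (proj2 (proj2 Hsb) i j Hin Hjn Hij z Zi Zj) as [[Ej Ez] | [Ei Ez]].
  - exists i, j, (vtx vs j); repeat split; auto.
    + exists j; split; [exact Hjn | reflexivity].
    + right; rewrite Ej; reflexivity.
    + left; reflexivity.
  - exists i, j, (vtx vs i); repeat split; auto.
    + exists i; split; [exact Hin | reflexivity].
    + left; reflexivity.
    + right; rewrite Ei; reflexivity.
Qed.

Lemma no_extreme_corner_in_region vs a b ia ib z :
  simple_polygon vs -> rectilinear vs -> ~ has_extreme_corner vs ->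
  (a = 1 \/ a = -1) -> (b = 1 \/ b = -1) -> min_edge vs a 0 ia -> min_edge vs 0 b ib ->
  dot a 0 z = dot a 0 (vtx vs ia) -> dot 0 b z = dot 0 b (vtx vs ib) -> ~ region vs z.
Proof.
  intros Hsp Hr Hnc Ha Hb Ea Eb Za Zb Hz.
  assert (Da : axis_dir a 0) by (unfold axis_dir; lra).
  assert (Db : axis_dir 0 b) by (unfold axis_dir; lra).
  destruct (min_edge_contains vs a 0 Da Hsp Hr ia z Ea Hz Za) as [i [Ei Oi]].
  destruct (min_edge_contains vs 0 b Db Hsp Hr ib z Eb Hz Zb) as [j [Ej Oj]].
  destruct (extreme_vertical_of_min_edge vs a i Ha Ei) as [Xi Vi].
  destruct (extreme_horizontal_of_min_edge vs b j Hb Ej) as [Xj Hj].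
  exact (Hnc (extreme_corner_of_meet vs i j z (proj1 Hsp) Xi Xj Vi Hj Oi Oj)).
Qed.

Definition swap (z : point) : point := (snd z, fst z).

Lemma swap_involutive z : swap (swap z) = z.
Proof. destruct z; reflexivity. Qed.

Lemma seg_swap a b z : seg a b z -> seg (swap a) (swap b) (swap z).
Proof. intros [t [Ht [H1 H2]]]; exists t; simpl; auto. Qed.

Lemma seg_swap_iff a b z : seg (swap a) (swap b) (swap z) <-> seg a b z.
Proof.
  split; [|apply seg_swap]; intro H; apply seg_swap in H; rewrite !swap_involutive in H; exact H.
Qed.

Lemma last_map {A B} (f : A -> B) l d : last (map f l) (f d) = f (last l d).
Proof. induction l as [|x [|y l] IH]; [reflexivity | reflexivity | exact IH]. Qed.

(** * Convexity along the axes *)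

Definition vert_convex (A : point -> Prop) : Prop :=
  forall x y1 y2 y, A (x, y1) -> A (x, y2) -> y1 <= y <= y2 -> A (x, y).

Definition horiz_convex (A : point -> Prop) : Prop :=
  forall y x1 x2 x, A (x1, y) -> A (x2, y) -> x1 <= x <= x2 -> A (x, y).

Lemma l1_triang a b c : l1 a c <= l1 a b + l1 b c.
Proof.
  unfold l1; pose proof (Rabs_triang (fst a - fst b) (fst b - fst c)).
  pose proof (Rabs_triang (snd a - snd b) (snd b - snd c)).
  replace (fst a - fst b + (fst b - fst c)) with (fst a - fst c) in * by ring.
  replace (snd a - snd b + (snd b - snd c)) with (snd a - snd c) in * by ring; lra.
Qed.

Lemma l1_refl a : l1 a a = 0.
Proof. unfold l1; rewrite !Rminus_diag, Rabs_R0; ring. Qed.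

Lemma plen_through m : forall p d z, In z (p :: m) ->
  l1 p z + l1 z (last (p :: m) d) <= plen (p :: m).
Proof.
  induction m as [|b m IH]; intros p d z Hz.
  - destruct Hz as [<- | []]; simpl; rewrite l1_refl; lra.
  - change (plen (p :: b :: m)) with (l1 p b + plen (b :: m)).
    change (last (p :: b :: m) d) with (last (b :: m) d).
    destruct Hz as [<- | Hz].
    + pose proof (IH b d b (or_introl eq_refl)); rewrite l1_refl in *.
      pose proof (l1_triang p b (last (b :: m) d)); lra.
    + pose proof (IH b d z Hz); pose proof (l1_triang p b z); lra.
Qed.

Lemma path_in_vertical_covers A m : forall p d, path_in A (p :: m) ->
  (forall z, In z (p :: m) -> fst z = fst p) ->
  forall y, betw (snd p) (snd (last (p :: m) d)) y -> A (fst p, y).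
Proof.
  induction m as [|b m IH]; intros p d Hp Hx y Hy.
  - destruct p as [px py]; simpl in *; replace y with py by (destruct Hy; lra); exact Hp.
  - destruct Hp as [Hs Hp]; change (last (p :: b :: m) d) with (last (b :: m) d) in Hy.
    assert (Eb : fst b = fst p) by (apply Hx; right; left; reflexivity).
    destruct (classic (betw (snd p) (snd b) y)) as [H|H].
    + apply Hs, seg_vertical; [congruence | exact H].
    + rewrite <- Eb; apply (IH b d Hp); [|unfold betw in *; lra].
      intros z Hz; rewrite Eb; apply Hx; right; exact Hz.
Qed.

(* A path from p to q of length l1 p q cannot leave the vertical line through
   p and q, since any detour costs horizontal length. *)
Lemma shortest_path_vertical_covers A (p q : point) m : fst p = fst q ->
  last (p :: m) p = q -> plen (p :: m) = l1 p q -> path_in A (p :: m) ->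
  forall y, betw (snd p) (snd q) y -> A (fst p, y).
Proof.
  intros Hpq Hl Hpl Hpi.
  assert (Hx : forall z, In z (p :: m) -> fst z = fst p).
  { intros z Hz; pose proof (plen_through m p p z Hz) as P.
    rewrite Hl, Hpl in P; unfold l1 in P; rewrite Hpq, Rminus_diag, Rabs_R0 in P.
    pose proof (Rabs_triang (snd p - snd z) (snd z - snd q)) as T.
    replace (snd p - snd z + (snd z - snd q)) with (snd p - snd q) in T by ring.
    pose proof (Rabs_pos (fst q - fst z)); pose proof (Rabs_pos (fst z - fst q)).
    destruct (Req_dec (fst z) (fst q)) as [|Hne]; [congruence|].
    exfalso; apply (Rabs_no_R0 (fst q - fst z)); lra. }
  pose proof (path_in_vertical_covers A m p p Hpi Hx) as C; rewrite Hl in C; exact C.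
Qed.

Lemma rect_convex_vert_convex A : rect_convex A -> vert_convex A.
Proof.
  intros Hrc x y1 y2 y H1 H2 Hy.
  destruct (Hrc (x, y1) (x, y2) H1 H2) as [m [Hl [_ [Hpl Hpi]]]].
  exact (shortest_path_vertical_covers A (x, y1) (x, y2) m eq_refl Hl Hpl Hpi y (or_introl Hy)).
Qed.

Lemma plen_map_swap l : plen (map swap l) = plen l.
Proof.
  induction l as [|a [|b l] IH]; [reflexivity | reflexivity |].
  change (l1 (swap a) (swap b) + plen (map swap (b :: l)) = l1 a b + plen (b :: l)).
  rewrite IH; unfold l1; simpl; ring.
Qed.

Lemma path_in_map_swap A l : path_in A l -> path_in (fun z => A (swap z)) (map swap l).
Proof.
  induction l as [|a [|b l] IH]; simpl; [tauto | rewrite swap_involutive; tauto |].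
  intros [Hs Hp]; split; [|exact (IH Hp)].
  intros z Hz; apply Hs; rewrite <- (swap_involutive z) in Hz.
  exact (proj1 (seg_swap_iff _ _ _) Hz).
Qed.

Lemma rect_convex_horiz_convex A : rect_convex A -> horiz_convex A.
Proof.
  intros Hrc y x1 x2 x H1 H2 Hx.
  destruct (Hrc (x1, y) (x2, y) H1 H2) as [m [Hl [_ [Hpl Hpi]]]].
  apply (shortest_path_vertical_covers (fun z => A (swap z)) (y, x1) (y, x2) (map swap m)
           eq_refl); [| | exact (path_in_map_swap A _ Hpi) | left; exact Hx].
  - change ((y, x1) :: map swap m) with (map swap ((x1, y) :: m)).
    change (y, x1) with (swap (x1, y)); rewrite last_map.
    exact (f_equal swap Hl).
  - change ((y, x1) :: map swap m) with (map swap ((x1, y) :: m)).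
    rewrite plen_map_swap; etransitivity; [exact Hpl | unfold l1; simpl; ring].
Qed.

Lemma map_swap_involutive vs : map swap (map swap vs) = vs.
Proof. rewrite map_map, (map_ext _ _ swap_involutive); apply map_id. Qed.

Section SwapPolygon.
Variable vs : list point.

Lemma vtx_swap i : vtx (map swap vs) i = swap (vtx vs i).
Proof. unfold vtx; change (0, 0) with (swap (0, 0)) at 1; apply map_nth. Qed.

Lemma enext_swap i : enext (map swap vs) i = enext vs i.
Proof. unfold enext; rewrite length_map; reflexivity. Qed.

Lemma on_edge_swap_iff i z : on_edge (map swap vs) i (swap z) <-> on_edge vs i z.
Proof. unfold on_edge; rewrite enext_swap, !vtx_swap; apply seg_swap_iff. Qed.

Lemma on_boundary_swap_iff z : on_boundary (map swap vs) (swap z) <-> on_boundary vs z.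
Proof.
  unfold on_boundary; rewrite length_map.
  split; intros [i [Hi He]]; exists i; split; try exact Hi; apply on_edge_swap_iff; exact He.
Qed.

Lemma inside_swap z : inside vs z -> inside (map swap vs) (swap z).
Proof.
  intros [Hnb [M HM]]; split; [rewrite on_boundary_swap_iff; exact Hnb|].
  exists M; intros f g Cf Cg F0 G0 Hav; rewrite Rplus_comm.
  apply (HM g f Cg Cf G0 F0); intros t Ht Hb; apply (Hav t Ht).
  exact (proj2 (on_boundary_swap_iff (g t, f t)) Hb).
Qed.

Lemma simple_boundary_swap : simple_boundary vs -> simple_boundary (map swap vs).
Proof.
  intros [H3 [Hnd Hs]]; rewrite <- (map_swap_involutive vs) in Hnd.
  split; [rewrite length_map; exact H3|]; split; [exact (NoDup_map_inv swap _ Hnd)|].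
  intros i j Hi Hj Hij p Hpi Hpj; rewrite length_map in Hi, Hj; rewrite !enext_swap, !vtx_swap.
  rewrite <- (swap_involutive p), on_edge_swap_iff in Hpi, Hpj.
  destruct (Hs i j Hi Hj Hij _ Hpi Hpj) as [[E1 E2] | [E1 E2]];
    [left | right]; (split; [exact E1 | rewrite <- E2, swap_involutive; reflexivity]).
Qed.

Lemma rectilinear_swap : rectilinear vs -> rectilinear (map swap vs).
Proof.
  intros H i Hi; rewrite length_map in Hi; rewrite enext_swap, !vtx_swap; simpl.
  destruct (H i Hi); [right | left]; assumption.
Qed.

End SwapPolygon.

Lemma region_swap_iff vs z : region (map swap vs) (swap z) <-> region vs z.
Proof.
  unfold region; rewrite on_boundary_swap_iff; split; intros [Hb | Hin]; auto; right.
  - apply inside_swap in Hin; rewrite map_swap_involutive, swap_involutive in Hin; exact Hin.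
  - exact (inside_swap vs z Hin).
Qed.

Lemma interior_swap (A B : point -> Prop) z : (forall p, B p -> A (swap p)) ->
  Defs.interior B z -> Defs.interior A (swap z).
Proof.
  intros HBA [e [He H]]; exists e; split; [exact He|]; intros q Hx Hy.
  rewrite <- (swap_involutive q); apply HBA, H; assumption.
Qed.

Lemma cyclic_crossing (f : nat -> R) n x0 a b : (a < n)%nat -> (b < n)%nat ->
  f a < x0 -> x0 < f b -> (forall k, (k < n)%nat -> f k <> x0) ->
  exists k, (k < n)%nat /\ f k < x0 < f (S k mod n).
Proof.
  intros Ha Hb Fa Fb Hne.
  set (P := fun k => if Rlt_dec (f k) x0 then true else false).
  assert (PT : forall k, P k = true <-> f k < x0)
    by (intro k; unfold P; destruct (Rlt_dec (f k) x0); split; congruence || lra).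
  destruct (cyclic_switch P n a b Ha Hb) as [k [Hk [Pk Pk']]];
    [apply PT; exact Fa | destruct (P b) eqn:E; [apply PT in E; lra | reflexivity] |].
  assert (Hk' : (S k mod n < n)%nat) by (apply Nat.mod_upper_bound; lia).
  exists k; split; [exact Hk | split; [apply PT; exact Pk |]].
  destruct (Rlt_le_dec x0 (f (S k mod n))) as [|Hle]; [assumption|].
  destruct (Req_dec (f (S k mod n)) x0) as [E|]; [exact (False_ind _ (Hne _ Hk' E))|].
  assert (Hlt : f (S k mod n) < x0) by lra; apply PT in Hlt; congruence.
Qed.

Lemma vert_convex_betw A x y1 y2 y : vert_convex A ->
  A (x, y1) -> A (x, y2) -> betw y1 y2 y -> A (x, y).
Proof.
  intros HV H1 H2 [Hy | Hy]; [exact (HV x y1 y2 y H1 H2 Hy) | exact (HV x y2 y1 y H2 H1 Hy)].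
Qed.

Lemma interior_between_horizontals A u w x0 y1 y2 : vert_convex A -> horiz_convex A ->
  u < x0 < w -> y1 <> y2 ->
  (forall x, u <= x <= w -> A (x, y1)) -> (forall x, u <= x <= w -> A (x, y2)) ->
  Defs.interior A (x0, (y1 + y2) / 2).
Proof.
  intros HV HH Hx Hy A1 A2.
  set (e := Rmin (Rmin (x0 - u) (w - x0)) (Rabs (y2 - y1) / 2)).
  assert (He : 0 < e).
  { pose proof (Rabs_pos_lt (y2 - y1) ltac:(lra)).
    unfold e; repeat apply Rmin_glb_lt; lra. }
  exists e; split; [exact He|]; intros [qx qy] Hqx Hqy; simpl in Hqx, Hqy.
  pose proof (Rmin_l (Rmin (x0 - u) (w - x0)) (Rabs (y2 - y1) / 2)).
  pose proof (Rmin_r (Rmin (x0 - u) (w - x0)) (Rabs (y2 - y1) / 2)).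
  pose proof (Rmin_l (x0 - u) (w - x0)); pose proof (Rmin_r (x0 - u) (w - x0)).
  apply Rabs_def2 in Hqx; apply Rabs_def2 in Hqy.
  assert (Hqy' : betw y1 y2 qy).
  { unfold betw, e in *; destruct (Rle_dec y1 y2).
    - rewrite Rabs_pos_eq in * by lra; lra.
    - rewrite Rabs_left in * by lra; lra. }
  apply (HH qy u w qx); [| | unfold e in *; lra];
    apply (vert_convex_betw A _ y1 y2 qy HV); try exact Hqy';
    [apply A1 | apply A2 | apply A1 | apply A2]; lra.
Qed.

(* A generic vertical line through the obstacle crosses the boundary along a
   horizontal edge in each direction; the two edges have distinct heights and
   the rectangle between them lies in the obstacle. *)
Lemma interior_point_at_x vs x0 a b : simple_boundary vs -> rectilinear vs ->
  vert_convex (region vs) -> horiz_convex (region vs) ->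
  (a < length vs)%nat -> fst (vtx vs a) < x0 -> (b < length vs)%nat -> x0 < fst (vtx vs b) ->
  (forall k, (k < length vs)%nat -> fst (vtx vs k) <> x0) ->
  exists z, Defs.interior (region vs) z /\ fst z = x0.
Proof.
  intros [H3 [Hnd Hs]] Hr HV HH Ha Pa Hb Pb Hnv.
  destruct (cyclic_crossing (fun k => fst (vtx vs k)) _ x0 a b Ha Hb Pa Pb Hnv)
    as [k1 [Hk1 C1]].
  destruct (cyclic_crossing (fun k => - fst (vtx vs k)) _ (- x0) b a Hb Ha) as [k2 [Hk2 C2]];
    [lra | lra | intros k Hk E; apply (Hnv k Hk); lra |].
  change (S k1 mod length vs)%nat with (enext vs k1) in C1.
  change (S k2 mod length vs)%nat with (enext vs k2) in C2.
  assert (Y1 : snd (vtx vs k1) = snd (vtx vs (enext vs k1))) by (destruct (Hr k1 Hk1); lra).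
  assert (Y2 : snd (vtx vs k2) = snd (vtx vs (enext vs k2))) by (destruct (Hr k2 Hk2); lra).
  set (u := Rmax (fst (vtx vs k1)) (fst (vtx vs (enext vs k2)))).
  set (w := Rmin (fst (vtx vs (enext vs k1))) (fst (vtx vs k2))).
  assert (Hu : u < x0) by (apply Rmax_lub_lt; lra).
  assert (Hw : x0 < w) by (apply Rmin_glb_lt; lra).
  assert (E1 : forall x, u <= x <= w -> on_edge vs k1 (x, snd (vtx vs k1))).
  { intros x Hx; unfold u, w in Hx; apply seg_horizontal; [exact Y1 | left].
    pose proof (Rmax_l (fst (vtx vs k1)) (fst (vtx vs (enext vs k2)))).
    pose proof (Rmin_l (fst (vtx vs (enext vs k1))) (fst (vtx vs k2))); lra. }
  assert (E2 : forall x, u <= x <= w -> on_edge vs k2 (x, snd (vtx vs k2))).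
  { intros x Hx; unfold u, w in Hx; apply seg_horizontal; [exact Y2 | right].
    pose proof (Rmax_r (fst (vtx vs k1)) (fst (vtx vs (enext vs k2)))).
    pose proof (Rmin_r (fst (vtx vs (enext vs k1))) (fst (vtx vs k2))); lra. }
  assert (Hy : snd (vtx vs k1) <> snd (vtx vs k2)).
  { intro E; assert (Hk12 : k1 <> k2) by (intros <-; lra).
    assert (O2 : on_edge vs k2 (x0, snd (vtx vs k1))) by (rewrite E; apply E2; lra).
    destruct (Hs k1 k2 Hk1 Hk2 Hk12 _ (E1 x0 ltac:(lra)) O2) as [[_ F] | [_ F]];
      [apply (Hnv k2 Hk2) | apply (Hnv k1 Hk1)]; rewrite <- F; reflexivity. }
  exists (x0, (snd (vtx vs k1) + snd (vtx vs k2)) / 2); split; [|reflexivity].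
  apply interior_between_horizontals with u w; auto; intros x Hx; left;
    [exists k1 | exists k2]; split; auto.
Qed.

Lemma interior_point_at_y vs y0 a b : simple_boundary vs -> rectilinear vs ->
  vert_convex (region vs) -> horiz_convex (region vs) ->
  (a < length vs)%nat -> snd (vtx vs a) < y0 -> (b < length vs)%nat -> y0 < snd (vtx vs b) ->
  (forall k, (k < length vs)%nat -> snd (vtx vs k) <> y0) ->
  exists z, Defs.interior (region vs) z /\ snd z = y0.
Proof.
  intros Hs Hr HV HH Ha Pa Hb Pb Hnv.
  set (ws := map swap vs).
  assert (Rsw : forall p, region ws p <-> region vs (swap p)).
  { intro p; rewrite <- (swap_involutive p) at 1; apply region_swap_iff. }
  assert (HVw : vert_convex (region ws)).
  { intros x y1 y2 y H1 H2 Hy; apply Rsw; apply Rsw in H1, H2; exact (HH x y1 y2 y H1 H2 Hy). }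
  assert (HHw : horiz_convex (region ws)).
  { intros y x1 x2 x H1 H2 Hx; apply Rsw; apply Rsw in H1, H2; exact (HV y x1 x2 x H1 H2 Hx). }
  assert (Lw : length ws = length vs) by apply length_map.
  assert (Hnw : forall k, (k < length ws)%nat -> fst (vtx ws k) <> y0)
    by (intros k Hk; unfold ws; rewrite vtx_swap; apply Hnv; rewrite <- Lw; exact Hk).
  destruct (interior_point_at_x ws y0 a b (simple_boundary_swap vs Hs) (rectilinear_swap vs Hr)
              HVw HHw) as [z [Hz Ez]];
    [ rewrite Lw; exact Ha | unfold ws; rewrite vtx_swap; exact Pa
    | rewrite Lw; exact Hb | unfold ws; rewrite vtx_swap; exact Pb | exact Hnw |].
  exists (swap z); split; [exact (interior_swap _ _ z (fun p => proj1 (Rsw p)) Hz) | exact Ez].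
Qed.

(** * Projections of a skeleton *)

Definition in_proj (g : point -> R) (s : point * point) (w : R) : Prop :=
  betw (g (fst s)) (g (snd s)) w.

Lemma exists_not_in u v (V : list R) : u < v -> exists x, u < x < v /\ ~ In x V.
Proof.
  revert u v; induction V as [|a V IH]; intros u v H.
  - exists ((u + v) / 2); split; [lra | intros []].
  - destruct (classic (u < a < v)) as [Ha | Ha];
      [destruct (IH u a) as [x [Hx Hn]] | destruct (IH u v) as [x [Hx Hn]]]; try lra;
      (exists x; split; [lra | intros [E | E]; [lra | contradiction]]).
Qed.

Lemma in_proj_or_isolated g w S : (exists s, In s S /\ in_proj g s w) \/
  (exists d, 0 < d /\ forall x, Rabs (x - w) < d -> forall s, In s S -> ~ in_proj g s x).
Proof.
  induction S as [|s S [[s' [H1 H2]] | [d [Hd H]]]].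
  - right; exists 1; split; [lra | intros x _ s []].
  - left; exists s'; split; [right |]; assumption.
  - destruct (classic (in_proj g s w)) as [Hs|Hs]; [left; exists s; split; [left|]; auto|].
    right; unfold in_proj, betw in Hs.
    set (lo := Rmin (g (fst s)) (g (snd s))); set (hi := Rmax (g (fst s)) (g (snd s))).
    assert (Hout : w < lo \/ hi < w)
      by (unfold lo, hi, Rmin, Rmax; destruct (Rle_dec (g (fst s)) (g (snd s))); lra).
    set (r := Rmax (lo - w) (w - hi)).
    assert (Hr : 0 < r)
      by (unfold r; pose proof (Rmax_l (lo - w) (w - hi)); pose proof (Rmax_r (lo - w) (w - hi));
          lra).
    exists (Rmin d r); split; [apply Rmin_glb_lt; assumption|].
    pose proof (Rmin_l d r); pose proof (Rmin_r d r).
    intros x Hx s'' [<- | Hs'']; [|apply (H x); [lra | exact Hs'']].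
    apply Rabs_def2 in Hx; unfold in_proj, betw.
    unfold r, lo, hi, Rmin, Rmax in *; repeat destruct Rle_dec; lra.
Qed.

(* A finite union of closed intervals is closed. *)
Lemma in_proj_closure g S lo hi (V : list R) : lo < hi ->
  (forall x, lo < x < hi -> ~ In x V -> exists s, In s S /\ in_proj g s x) ->
  forall w, lo <= w <= hi -> exists s, In s S /\ in_proj g s w.
Proof.
  intros Hlh Hc w Hw; destruct (in_proj_or_isolated g w S) as [H | [d [Hd H]]]; [exact H | exfalso].
  destruct (exists_not_in (Rmax lo (w - d)) (Rmin hi (w + d)) V) as [x [Hx Hn]];
    [apply Rmax_lub_lt; apply Rmin_glb_lt; lra|].
  pose proof (Rmax_l lo (w - d)); pose proof (Rmax_r lo (w - d)).
  pose proof (Rmin_l hi (w + d)); pose proof (Rmin_r hi (w + d)).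
  destruct (Hc x ltac:(lra) Hn) as [s [Hs Hp]].
  apply (H x) with s; [apply Rabs_def1; lra | exact Hs | exact Hp].
Qed.

Lemma interior_self A z : Defs.interior A z -> A z.
Proof. intros [e [He H]]; apply H; rewrite Rminus_diag, Rabs_R0; exact He. Qed.

Lemma seg_degenerate a z : seg a a z -> z = a.
Proof. intros [t [_ [H1 H2]]]; apply injective_projections; [rewrite H1 | rewrite H2]; ring. Qed.

Lemma lpath_aligned p q c x : fst p = fst q \/ snd p = snd q -> lcorner p q c ->
  (lpath p q c x <-> seg p q x).
Proof.
  intros Hal Hc.
  assert (Hpq : c = p \/ c = q).
  { destruct p, q; unfold lcorner in Hc; simpl in *; destruct Hal as [<- | <-];
      destruct Hc as [-> | ->]; auto. }
  unfold lpath; destruct Hpq as [-> | ->]; split; try tauto; intros [H | H]; auto;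
    apply seg_degenerate in H; subst x; [apply seg_start | apply seg_end].
Qed.

Lemma skeleton_meets_aligned vs S p q z : is_skeleton vs S ->
  fst p = fst q \/ snd p = snd q ->
  ~ Defs.interior (region vs) p -> ~ Defs.interior (region vs) q ->
  Defs.interior (region vs) z -> seg p q z ->
  exists s x, In s S /\ seg p q x /\ seg (fst s) (snd s) x.
Proof.
  intros [_ Hsk] Hal Np Nq Hz Hzpq.
  destruct (Hsk p q Np Nq) with (c := (fst q, snd p)) as [s [x [Hs [Hl Hx]]]];
    [| left; reflexivity |].
  - intros c Hc; exists z; split; [apply (lpath_aligned p q c z Hal Hc) | ]; assumption.
  - exists s, x; split; [exact Hs|]; split; [|exact Hx].
    exact (proj1 (lpath_aligned p q _ x Hal (or_introl eq_refl)) Hl).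
Qed.

Lemma skeleton_covers_fst vs S z y1 y2 : is_skeleton vs S ->
  Defs.interior (region vs) z -> y1 <= snd z <= y2 ->
  ~ region vs (fst z, y1) -> ~ region vs (fst z, y2) ->
  exists s, In s S /\ in_proj fst s (fst z).
Proof.
  intros Hsk Hz Hy N1 N2.
  destruct (skeleton_meets_aligned vs S (fst z, y1) (fst z, y2) z Hsk (or_introl eq_refl))
    as [s [x [Hs [Hx Hsx]]]];
    [ intro H; exact (N1 (interior_self _ _ H)) | intro H; exact (N2 (interior_self _ _ H))
    | exact Hz
    | destruct z as [zx zy]; exact (seg_vertical (zx, y1) (zx, y2) zy eq_refl (or_introl Hy)) |].
  exists s; split; [exact Hs|]; apply seg_betw_fst in Hx, Hsx; simpl in Hx.
  replace (fst z) with (fst x) by (destruct Hx; lra); exact Hsx.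
Qed.

Lemma skeleton_covers_snd vs S z x1 x2 : is_skeleton vs S ->
  Defs.interior (region vs) z -> x1 <= fst z <= x2 ->
  ~ region vs (x1, snd z) -> ~ region vs (x2, snd z) ->
  exists s, In s S /\ in_proj snd s (snd z).
Proof.
  intros Hsk Hz Hx N1 N2.
  destruct (skeleton_meets_aligned vs S (x1, snd z) (x2, snd z) z Hsk (or_intror eq_refl))
    as [s [y [Hs [Hy Hsy]]]];
    [ intro H; exact (N1 (interior_self _ _ H)) | intro H; exact (N2 (interior_self _ _ H))
    | exact Hz
    | destruct z as [zx zy]; exact (seg_horizontal (x1, zy) (x2, zy) zx eq_refl (or_introl Hx)) |].
  exists s; split; [exact Hs|]; apply seg_betw_snd in Hy, Hsy; simpl in Hy.
  replace (snd z) with (snd y) by (destruct Hy; lra); exact Hsy.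
Qed.

(* The point of BT above abscissa x lies between the points of BQ1 and TQ2
   above x, so vertical convexity puts it in A. *)
Lemma seg_inside_bridge A B Q1 T Q2 : vert_convex A ->
  seg_inside A B Q1 -> seg_inside A T Q2 ->
  snd B <= snd Q1 <= snd T -> snd B <= snd Q2 <= snd T ->
  betw (fst B) (fst Q1) (fst T) -> betw (fst T) (fst Q2) (fst B) ->
  seg_inside A B T.
Proof.
  intros HV H1 H2 Q1y Q2y Bt1 Bt2 [zx zy] [l [Hl [Zx Zy]]]; simpl in Zx, Zy; subst zx zy.
  destruct (seg_inside_ends A B Q1 H1) as [AB _]; destruct (seg_inside_ends A T Q2 H2) as [AT _].
  destruct (Req_dec (fst T) (fst B)) as [Et|Et].
  - rewrite Et, Rminus_diag, Rmult_0_r, Rplus_0_r.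
    apply (HV (fst B) (snd B) (snd T));
      [destruct B; exact AB | rewrite <- Et; destruct T; exact AT | nra].
  - destruct (ratio_unit _ _ _ Bt1 Et) as [[R1a R1b] R1e].
    destruct (ratio_unit _ _ _ Bt2 ltac:(lra)) as [[R2a R2b] R2e].
    set (r1 := (fst T - fst B) / (fst Q1 - fst B)) in *.
    set (r2 := (fst B - fst T) / (fst Q2 - fst T)) in *.
    assert (A1 : A (fst B + l * r1 * (fst Q1 - fst B), snd B + l * r1 * (snd Q1 - snd B)))
      by (apply H1; exists (l * r1); split; [split; nra | split; reflexivity]).
    assert (A2 : A (fst T + (1 - l) * r2 * (fst Q2 - fst T),
                    snd T + (1 - l) * r2 * (snd Q2 - snd T)))
      by (apply H2; exists ((1 - l) * r2); split; [split; nra | split; reflexivity]).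
    replace (fst B + l * r1 * (fst Q1 - fst B)) with (fst B + l * (fst T - fst B)) in A1
      by (rewrite Rmult_assoc, R1e; reflexivity).
    replace (fst T + (1 - l) * r2 * (fst Q2 - fst T)) with (fst B + l * (fst T - fst B)) in A2
      by (rewrite Rmult_assoc, R2e; ring).
    assert (0 <= l * r1 <= l) by (split; nra).
    assert (0 <= (1 - l) * r2 <= 1 - l) by (split; nra).
    apply (HV _ _ _ _ A1 A2); split; nra.
Qed.

Lemma two_intervals_cover xL xR b q1 t q2 : xL < xR ->
  (forall w, xL <= w <= xR -> betw b q1 w \/ betw t q2 w) ->
  xL <= b <= xR -> xL <= q1 <= xR -> xL <= t <= xR -> xL <= q2 <= xR ->
  b <> xL -> b <> xR -> t <> xL -> t <> xR ->
  betw b q1 t /\ betw t q2 b.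
Proof.
  unfold betw; intros Hx Cov Hb Hq1 Ht Hq2 b1 b2 t1 t2.
  assert (GL : q1 = xL \/ q2 = xL) by (destruct (Cov xL ltac:(lra)); lra).
  assert (GR : q1 = xR \/ q2 = xR) by (destruct (Cov xR ltac:(lra)); lra).
  assert (Mid := Cov ((b + t) / 2)).
  destruct GL as [E1|E1]; destruct GR as [E2|E2]; try lra;
    destruct (Rle_dec t b); try lra; destruct Mid; lra.
Qed.

Definition oriented (s : point * point) (B Q : point) : Prop :=
  (B = fst s /\ Q = snd s) \/ (B = snd s /\ Q = fst s).

Lemma oriented_seg_inside A s B Q : seg_inside A (fst s) (snd s) -> oriented s B Q ->
  seg_inside A B Q.
Proof. intros H [[-> ->] | [-> ->]]; [exact H | intros z Hz; apply H, seg_sym, Hz]. Qed.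

Lemma oriented_in_proj g s B Q w : oriented s B Q -> in_proj g s w -> betw (g B) (g Q) w.
Proof. unfold in_proj, betw; intros [[-> ->] | [-> ->]]; lra. Qed.

Lemma oriented_at_extreme g s w : in_proj g s w ->
  (w <= g (fst s) /\ w <= g (snd s)) \/ (g (fst s) <= w /\ g (snd s) <= w) ->
  exists B Q, oriented s B Q /\ g B = w.
Proof.
  unfold in_proj, betw; intros H1 H2; destruct (Req_dec (g (fst s)) w).
  - exists (fst s), (snd s); split; [left; split |]; auto.
  - exists (snd s), (fst s); split; [right; split; reflexivity | lra].
Qed.

Lemma length_le_2_two {T} (S : list T) s1 s2 : (length S <= 2)%nat -> In s1 S -> In s2 S ->
  s1 <> s2 -> forall s, In s S -> s = s1 \/ s = s2.
Proof.
  intros Hl H1 H2 Hn s Hs; destruct S as [|x [|y [|z r]]]; simpl in *;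
    [contradiction | intuition congruence | intuition congruence | lia].
Qed.

Definition cornerless_box (A : point -> Prop) (xL xR yB yT : R) : Prop :=
  xL < xR /\ yB < yT /\ (forall z, A z -> xL <= fst z <= xR /\ yB <= snd z <= yT) /\
  ~ A (xL, yB) /\ ~ A (xR, yB) /\ ~ A (xL, yT) /\ ~ A (xR, yT).

Definition covers_box (S : list (point * point)) (xL xR yB yT : R) : Prop :=
  (forall w, xL <= w <= xR -> exists s, In s S /\ in_proj fst s w) /\
  (forall w, yB <= w <= yT -> exists s, In s S /\ in_proj snd s w).

(* One segment reaches the bottom side and one the top side.  If they are the
   same segment it crosses the box; otherwise their x-projections must cover
   [xL, xR] between them while avoiding the corners, which forces them to
   overlap so that the bridge between their ends stays in A. *)
Lemma vertical_crossing A xL xR yB yT S : vert_convex A -> cornerless_box A xL xR yB yT ->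
  (length S <= 2)%nat -> (forall s, In s S -> seg_inside A (fst s) (snd s)) ->
  covers_box S xL xR yB yT ->
  exists a b, a <> b /\ seg_inside A a b /\ snd a = yB /\ snd b = yT.
Proof.
  intros HV [Hx [Hy [Hbox [C1 [C2 [C3 C4]]]]]] Hl HS [Cx Cy].
  assert (Ends : forall s, In s S -> A (fst s) /\ A (snd s))
    by (intros s Hs; exact (seg_inside_ends _ _ _ (HS s Hs))).
  destruct (Cy yB ltac:(lra)) as [s1 [Hs1 P1]].
  destruct (oriented_at_extreme snd s1 yB P1) as [B [Q1 [En1 EB]]].
  { left; destruct (Ends s1 Hs1) as [Ea Eb]; apply Hbox in Ea, Eb; lra. }
  destruct (Cy yT ltac:(lra)) as [s2 [Hs2 P2]].
  destruct (oriented_at_extreme snd s2 yT P2) as [T [Q2 [En2 ET]]].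
  { right; destruct (Ends s2 Hs2) as [Ea Eb]; apply Hbox in Ea, Eb; lra. }
  pose proof (oriented_seg_inside A s1 B Q1 (HS s1 Hs1) En1) as I1.
  pose proof (oriented_seg_inside A s2 T Q2 (HS s2 Hs2) En2) as I2.
  destruct (seg_inside_ends _ _ _ I1) as [AB AQ1]; destruct (seg_inside_ends _ _ _ I2) as [AT AQ2].
  pose proof (Hbox _ AB); pose proof (Hbox _ AQ1); pose proof (Hbox _ AT); pose proof (Hbox _ AQ2).
  assert (BneT : B <> T) by (intros ->; lra).
  exists B, T; split; [exact BneT | split; [|split; assumption]].
  destruct (classic (s1 = s2)) as [<- | Hne].
  - replace T with Q1; [exact I1|].
    destruct En1 as [[-> ->] | [-> ->]], En2 as [[-> ->] | [-> ->]]; tauto.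
  - assert (Cov : forall w, xL <= w <= xR ->
                     betw (fst B) (fst Q1) w \/ betw (fst T) (fst Q2) w).
    { intros w Hw; destruct (Cx w Hw) as [s [Hs Ps]].
      destruct (length_le_2_two S s1 s2 Hl Hs1 Hs2 Hne s Hs) as [-> | ->];
        [left; exact (oriented_in_proj _ _ _ _ _ En1 Ps)
        | right; exact (oriented_in_proj _ _ _ _ _ En2 Ps)]. }
    assert (NotCorner : forall z, A z -> snd z = yB \/ snd z = yT -> fst z <> xL /\ fst z <> xR).
    { intros [zx zy] Hz Hzy; simpl in Hzy; split; intros E; simpl in E; subst zx;
        destruct Hzy as [-> | ->]; auto. }
    destruct (NotCorner B AB (or_introl EB)); destruct (NotCorner T AT (or_intror ET)).
    destruct (two_intervals_cover xL xR (fst B) (fst Q1) (fst T) (fst Q2) Hx Cov) as [Bt1 Bt2];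
      try tauto; try lra.
    apply (seg_inside_bridge A B Q1 T Q2 HV I1 I2); lra || assumption.
Qed.

Definition swap_seg (s : point * point) : point * point := (swap (fst s), swap (snd s)).

Lemma horizontal_crossing A xL xR yB yT S : horiz_convex A -> cornerless_box A xL xR yB yT ->
  (length S <= 2)%nat -> (forall s, In s S -> seg_inside A (fst s) (snd s)) ->
  covers_box S xL xR yB yT ->
  exists a b, a <> b /\ seg_inside A a b /\ fst a = xL /\ fst b = xR.
Proof.
  intros HH [Hx [Hy [Hbox [C1 [C2 [C3 C4]]]]]] Hl HS [Cx Cy].
  assert (Sw : forall a b, seg_inside A a b ->
                seg_inside (fun z => A (swap z)) (swap a) (swap b)).
  { intros a b H z Hz; apply H; rewrite <- (swap_involutive z) in Hz.
    exact (proj1 (seg_swap_iff _ _ _) Hz). }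
  destruct (vertical_crossing (fun z => A (swap z)) yB yT xL xR (map swap_seg S))
    as [a [b [Hab [Hi [Ea Eb]]]]].
  - exact HH.
  - refine (conj Hy (conj Hx (conj _ (conj C1 (conj C3 (conj C2 C4)))))).
    intros z Hz; apply Hbox in Hz; simpl in *; lra.
  - rewrite length_map; exact Hl.
  - intros s Hs; apply in_map_iff in Hs; destruct Hs as [s0 [<- Hs0]]; exact (Sw _ _ (HS s0 Hs0)).
  - split; intros w Hw; [destruct (Cy w Hw) as [s [Hs Ps]] | destruct (Cx w Hw) as [s [Hs Ps]]];
      exists (swap_seg s); split; solve [apply in_map; exact Hs | exact Ps].
  - exists (swap a), (swap b); split; [|split; [|split; assumption]].
    + intro E; apply Hab; rewrite <- (swap_involutive a), <- (swap_involutive b), E; reflexivity.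
    + intros z Hz; rewrite <- (swap_involutive z); apply Hi.
      rewrite <- seg_swap_iff, !swap_involutive in Hz; exact Hz.
Qed.

(** * The bounding box of a general obstacle *)

Section BoundingBox.
Variables (vs : list point) (iL iR iB iT : nat).
Hypotheses (Hsp : simple_polygon vs) (Hr : rectilinear vs) (Hrc : rect_convex (region vs))
  (Hnc : ~ has_extreme_corner vs)
  (EL : min_edge vs 1 0 iL) (ER : min_edge vs (-1) 0 iR)
  (EB : min_edge vs 0 1 iB) (ET : min_edge vs 0 (-1) iT).

Let xL := fst (vtx vs iL).
Let xR := fst (vtx vs iR).
Let yB := snd (vtx vs iB).
Let yT := snd (vtx vs iT).

Lemma region_in_box z : region vs z -> xL <= fst z <= xR /\ yB <= snd z <= yT.
Proof.
  intro Hz; destruct EL as [_ [_ BL]], ER as [_ [_ BR]], EB as [_ [_ BB]], ET as [_ [_ BT]].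
  specialize (BL z Hz); specialize (BR z Hz); specialize (BB z Hz); specialize (BT z Hz).
  unfold dot in *; unfold xL, xR, yB, yT; lra.
Qed.

(* The bottom edge is horizontal with distinct endpoints, so the box has
   positive width; likewise the left edge gives positive height. *)
Lemma box_nondegenerate : xL < xR /\ yB < yT.
Proof.
  destruct EL as [HiL [FL _]], EB as [HiB [FB _]]; unfold dot in FB, FL.
  pose proof (edge_endpoints_neq vs iB (proj1 Hsp) HiB) as NB.
  pose proof (edge_endpoints_neq vs iL (proj1 Hsp) HiL) as NL.
  pose proof (region_in_box _ (vtx_region vs iB HiB)) as B1.
  pose proof (region_in_box _ (vtx_region vs _ (enext_lt vs iB HiB))) as B2.
  pose proof (region_in_box _ (vtx_region vs iL HiL)) as L1.
  pose proof (region_in_box _ (vtx_region vs _ (enext_lt vs iL HiL))) as L2.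
  split.
  - destruct (Req_dec (fst (vtx vs iB)) (fst (vtx vs (enext vs iB)))) as [E|E]; [|lra].
    exfalso; apply NB, injective_projections; lra.
  - destruct (Req_dec (snd (vtx vs iL)) (snd (vtx vs (enext vs iL)))) as [E|E]; [|lra].
    exfalso; apply NL, injective_projections; lra.
Qed.

Lemma region_cornerless_box : cornerless_box (region vs) xL xR yB yT.
Proof.
  destruct box_nondegenerate as [Hx Hy].
  split; [exact Hx | split; [exact Hy | split; [exact region_in_box |]]].
  split; [|split; [|split]];
    [ apply (no_extreme_corner_in_region vs 1 1 iL iB)
    | apply (no_extreme_corner_in_region vs (-1) 1 iR iB)
    | apply (no_extreme_corner_in_region vs 1 (-1) iL iT)
    | apply (no_extreme_corner_in_region vs (-1) (-1) iR iT) ];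
    auto; try lra; unfold dot, xL, xR, yB, yT; simpl; ring.
Qed.

Lemma skeleton_covers_box S : is_skeleton vs S -> covers_box S xL xR yB yT.
Proof.
  intro Hsk; destruct region_cornerless_box as [Hx [Hy _]].
  pose proof (rect_convex_vert_convex _ Hrc) as HV.
  pose proof (rect_convex_horiz_convex _ Hrc) as HH.
  assert (Out : forall z, fst z < xL \/ xR < fst z \/ snd z < yB \/ yT < snd z -> ~ region vs z)
    by (intros z Hz Hreg; apply region_in_box in Hreg; lra).
  split.
  - apply (in_proj_closure fst S xL xR (map fst vs) Hx); intros x0 Hx0 Hn.
    destruct (interior_point_at_x vs x0 iL iR (proj1 Hsp) Hr HV HH (proj1 EL) ltac:(fold xL; lra)
                (proj1 ER) ltac:(fold xR; lra)) as [z [Hz <-]].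
    { intros k Hk E; apply Hn; rewrite <- E; apply in_map, nth_In, Hk. }
    pose proof (region_in_box z (interior_self _ _ Hz)).
    apply (skeleton_covers_fst vs S z (yB - 1) (yT + 1) Hsk Hz); [lra | apply Out; simpl; lra ..].
  - apply (in_proj_closure snd S yB yT (map snd vs) Hy); intros y0 Hy0 Hn.
    destruct (interior_point_at_y vs y0 iB iT (proj1 Hsp) Hr HV HH (proj1 EB) ltac:(fold yB; lra)
                (proj1 ET) ltac:(fold yT; lra)) as [z [Hz <-]].
    { intros k Hk E; apply Hn; rewrite <- E; apply in_map, nth_In, Hk. }
    pose proof (region_in_box z (interior_self _ _ Hz)).
    apply (skeleton_covers_snd vs S z (xL - 1) (xR + 1) Hsk Hz); [lra | apply Out; simpl; lra ..].
Qed.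

Lemma small_skeleton_has_cross S : is_skeleton vs S -> (length S <= 2)%nat -> has_cross vs.
Proof.
  intros Hsk Hl.
  assert (HS : forall s, In s S -> seg_inside (region vs) (fst s) (snd s))
    by (intros s Hs; exact (proj2 (proj1 Hsk s Hs))).
  destruct (vertical_crossing (region vs) xL xR yB yT S (rect_convex_vert_convex _ Hrc)
              region_cornerless_box Hl HS (skeleton_covers_box S Hsk))
    as [a [b [Hab [Hiab [Ea Eb]]]]].
  destruct (horizontal_crossing (region vs) xL xR yB yT S (rect_convex_horiz_convex _ Hrc)
              region_cornerless_box Hl HS (skeleton_covers_box S Hsk))
    as [c [d [Hcd [Hicd [Ec Ed]]]]].
  destruct (seg_inside_ends _ _ _ Hiab) as [Ra Rb].
  destruct (seg_inside_ends _ _ _ Hicd) as [Rc Rd].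
  destruct (min_edge_contains vs 0 1 ltac:(left; lra) Hsp Hr iB a EB Ra) as [i1 [E1 O1]];
    [unfold dot; fold yB; lra|].
  destruct (min_edge_contains vs 0 (-1) ltac:(left; lra) Hsp Hr iT b ET Rb) as [i2 [E2 O2]];
    [unfold dot; fold yT; lra|].
  destruct (min_edge_contains vs 1 0 ltac:(right; lra) Hsp Hr iL c EL Rc) as [i3 [E3 O3]];
    [unfold dot; fold xL; lra|].
  destruct (min_edge_contains vs (-1) 0 ltac:(right; lra) Hsp Hr iR d ER Rd) as [i4 [E4 O4]];
    [unfold dot; fold xR; lra|].
  split; [exists a, b, i1, i2 | exists c, d, i3, i4];
    repeat match goal with |- _ /\ _ => split end;
    auto using bottom_edge_of_min_edge, top_edge_of_min_edge, left_edge_of_min_edge,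
      right_edge_of_min_edge.
Qed.

End BoundingBox.

Theorem corollary2 (vs : list point) (S : list (point * point)) :
  general_obstacle vs -> ~ has_cross vs -> min_skeleton vs S ->
  (3 <= length S)%nat.
Proof.
  intros [Hsp [Hr [Hrc Hnc]]] Hncr [Hsk _].
  destruct (le_lt_dec 3 (length S)) as [|Hlt]; [assumption | exfalso; apply Hncr].
  destruct (min_edge_exists vs 1 0 ltac:(right; lra) Hsp Hr) as [iL EL].
  destruct (min_edge_exists vs (-1) 0 ltac:(right; lra) Hsp Hr) as [iR ER].
  destruct (min_edge_exists vs 0 1 ltac:(left; lra) Hsp Hr) as [iB EB].
  destruct (min_edge_exists vs 0 (-1) ltac:(left; lra) Hsp Hr) as [iT ET].
  exact (small_skeleton_has_cross vs iL iR iB iT Hsp Hr Hrc Hnc EL ER EB ET S Hsk ltac:(lia)).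
Qed.
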